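(* Let $k$ be a nonnegative integer and let $G$ be a finite simple graph such that every topological minor of $G$ has a vertex of degree at most $k$. Then $G$ is dynamically $(k+3)$-colorable.
   Context: All graphs are finite and simple. A graph $H$ is a topological minor of $G$ if $G$ has a subgraph isomorphic to a subdivision of $H$ (in particular $G$ is a topological minor of itself). Given a proper vertex coloring of a graph, a vertex $v$ is happy if either $v$ has at most one neighbor or $v$ has two neighbors receiving distinct colors. A dynamic $m$-coloring is a proper vertex coloring with at most $m$ colors in which every vertex is happy; a graph is dynamically $m$-colorable if it has one. *)

From mathcomp Require Import all_boot.
Set Implicit Arguments. Unset Strict Implicit. Unset Printing Implicit Defensive.

Definition simple_graph (T : finType) (e : rel T) : Prop :=
  symmetric e /\ irreflexive e.

Definition deg (T : finType) (e : rel T) (x : T) : nat := #|[set y | e x y]|.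

(* H = (V, eH) is a topological minor of G = (T, eG): G contains a subdivision
   of H, i.e. an injective map phi of the branch vertices, and for every edge
   uv of H a path in G from phi u to phi v whose interior vertices P u v are
   distinct, not branch vertices, and disjoint from the interiors of the paths
   of all other edges (P v u is the same path reversed). *)
Definition topological_minor (V T : finType) (eH : rel V) (eG : rel T) : Prop :=
  exists (phi : V -> T) (P : V -> V -> seq T),
    [/\ injective phi,
        forall u v, eH u v -> path eG (phi u) (rcons (P u v) (phi v)) && uniq (P u v),
        forall u v, eH u v -> P v u = rev (P u v),
        forall u v x, eH u v -> x \in P u v -> x \notin codom phi
      & forall u v u' v', eH u v -> eH u' v' ->
          ~~ (((u == u') && (v == v')) || ((u == v') && (v == u'))) ->
          [disjoint P u v & P u' v'] ].

Definition dynamic_coloring (T : finType) (e : rel T) (m : nat) (c : T -> 'I_m) : Prop :=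
  (forall x y, e x y -> c x != c y) /\
  (forall v, deg e v <= 1 \/ exists x y, [/\ e v x, e v y & c x != c y]).

Definition dynamically_colorable (T : finType) (e : rel T) (m : nat) : Prop :=
  exists c : T -> 'I_m, dynamic_coloring e c.

(* Induction along topological minors of G, starting from G itself.  A topological
   minor H of G has a vertex of degree at most k, and v can even be chosen so that
   2 deg v <= k + 2, or deg v <= k and all neighbours of v have degree at least 3.
   Delete v and, if v has two non-adjacent neighbours a and b, join them by the path
   through v: this is again a topological minor of G, dynamically (k+3)-colourable by
   induction, and the edge ab (or, failing it, the clique on the neighbours of v)
   makes v happy.  To colour v, avoid the colours of its neighbours and, for each
   neighbour u whose other neighbours all share one colour, that colour.  At most
   deg v neighbours are of this kind, and only a and b when all neighbours have
   degree at least 3, since any other neighbour keeps degree at least 2 and is happy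
   in the smaller graph; either way at most k + 2 colours are excluded. *)

From mathcomp Require Import all_boot zify.
Set Implicit Arguments. Unset Strict Implicit. Unset Printing Implicit Defensive.

Section Subdivision.
Variables (T : finType) (e : rel T).

(* [h] is a graph on the branch vertices [S], and [Q x y] is the interior of the
   path of [e] that realises the edge [xy]. *)
Record subdivision (S : {set T}) (h : rel T) (Q : T -> T -> seq T) : Prop :=
  Subdivision {
    sd_sym : symmetric h;
    sd_irr : irreflexive h;
    sd_branch : forall x y, h x y -> x \in S;
    sd_path : forall x y, h x y -> path e x (rcons (Q x y) y);
    sd_uniq : forall x y, h x y -> uniq (Q x y);
    sd_rev : forall x y, h x y -> Q y x = rev (Q x y);
    sd_interior : forall x y z, h x y -> z \in Q x y -> z \notin S;
    sd_disjoint : forall x y x' y', h x y -> h x' y' ->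
      ~~ (((x == x') && (y == y')) || ((x == y') && (y == x'))) ->
      [disjoint Q x y & Q x' y'] }.

Lemma subdivision_refl : simple_graph e -> subdivision [set: T] e (fun _ _ => [::]).
Proof.
case=> esym eirr; split=> // [x y xy|x y x' y' _ _ _].
- by rewrite /= andbT.
- by rewrite disjoint_has.
Qed.

Definition induced (S : {set T}) (h : rel T) : rel {x | x \in S} :=
  fun u w => h (val u) (val w).
Arguments induced : clear implicits.

Section Induced.
Variables (S : {set T}) (h : rel T) (Q : T -> T -> seq T).
Hypothesis sd : subdivision S h Q.

Lemma subdivision_topological_minor : topological_minor (induced S h) e.
Proof.
have [_ _ _ hpath huniq hrev hint hdisj] := sd.
exists val, (fun u w => Q (val u) (val w)); split=> [||u w|u w z uw zQ|u w u' w' uw uw'].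
- exact: val_inj.
- by move=> u w uw; rewrite hpath ?huniq.
- exact: hrev.
- by apply/codomP=> -[y zy]; move: (hint _ _ _ uw zQ); rewrite zy (valP y).
- by apply: hdisj.
Qed.

Lemma deg_induced (u : {x | x \in S}) : deg (induced S h) u = deg h (val u).
Proof.
rewrite /deg -(card_imset _ val_inj); apply: eq_card=> y; rewrite inE.
apply/imsetP/idP=> [[w]|uy]; first by rewrite inE => ? ->.
have yS : y \in S by apply: (sd_branch sd (y := val u)); rewrite (sd_sym sd).
by exists (exist _ y yS); rewrite ?inE.
Qed.

End Induced.

Definition minors_mindeg_le (k : nat) : Prop :=
  forall (V : finType) (eH : rel V), simple_graph eH -> 0 < #|V| ->
    topological_minor eH e -> exists x : V, deg eH x <= k.

Lemma subdivision_low_degree k S h Q : minors_mindeg_le k ->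
  subdivision S h Q -> 0 < #|S| -> exists2 v, v \in S & deg h v <= k.
Proof.
move=> mindeg sd /card_gt0P[s sS].
have simple : simple_graph (induced S h).
  by split=> [u w|u]; rewrite /induced; [apply: (sd_sym sd) | apply: (sd_irr sd)].
have nonempty : 0 < #|{: {x | x \in S}}| by apply/card_gt0P; exists (exist _ s sS).
have [u] := mindeg _ _ simple nonempty (subdivision_topological_minor sd).
by rewrite (deg_induced sd); exists (val u); first exact: valP.
Qed.

End Subdivision.

Lemma rel_neq (T : eqType) (r : rel T) x y : irreflexive r -> r x y -> x != y.
Proof. by move=> rirr; apply: contraTneq => ->; rewrite rirr. Qed.

(* The choice [a = b] encodes that no edge is added. *)
Definition bypass (T : eqType) (h : rel T) (v a b : T) : rel T := fun x y =>
  [&& h x y, x != v & y != v] ||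
  (a != b) && ((x == a) && (y == b) || (x == b) && (y == a)).

Variant bypass_spec (T : eqType) (h : rel T) (v a b x y : T) : Prop :=
  | BypassOld of h x y & x != v & y != v
  | BypassNew of a != b & x = a & y = b
  | BypassNewRev of a != b & x = b & y = a.

Lemma bypassP (T : eqType) (h : rel T) (v a b x y : T) :
  bypass h v a b x y -> bypass_spec h v a b x y.
Proof.
case/orP=> [/and3P[]|/andP[ab /orP[]/andP[/eqP-> /eqP->]]]; first exact: BypassOld.
- exact: BypassNew.
- exact: BypassNewRev.
Qed.

Section BypassGraph.
Variables (T : finType) (h : rel T) (v a b : T).
Hypotheses (hsym : symmetric h) (hirr : irreflexive h).
Hypothesis Hab : a != b -> [&& h v a, h v b & ~~ h a b].
Local Notation g := (bypass h v a b).

Lemma nbr_neqv y : h v y -> (y == v) = false.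
Proof. by move=> vy; apply/negbTE; rewrite eq_sym (rel_neq hirr vy). Qed.

Lemma bypass_sym : symmetric g.
Proof.
have gyx x y : g x y -> g y x.
  case/bypassP=> [xy xv yv|ab -> ->|ab -> ->]; rewrite /bypass ?ab ?eqxx ?orbT //.
  by rewrite hsym xy xv yv.
by move=> x y; apply/idP/idP => /gyx.
Qed.

Lemma bypass_irr : irreflexive g.
Proof.
move=> x; apply/negP; case/bypassP=> [|ab xa xb|ab xb xa].
- by rewrite hirr.
- by move: ab; rewrite -xa -xb eqxx.
- by move: ab; rewrite -xa -xb eqxx.
Qed.

Lemma bypass_old_edge x y : h x y -> x != v -> y != v -> g x y.
Proof. by rewrite /bypass => -> -> ->. Qed.

Lemma bypass_nonnbr x : x != v -> ~~ h v x -> g x =1 h x.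
Proof.
move=> xv vx y; apply/idP/idP => [/bypassP[//|ab xa _|ab xb _]|xy].
- by case/and3P: (Hab ab) => va _ _; rewrite xa va in vx.
- by case/and3P: (Hab ab) => _ vb _; rewrite xb vb in vx.
- apply: bypass_old_edge => //; apply: contraNneq vx => yv.
  by rewrite hsym -yv.
Qed.

End BypassGraph.

Definition splice (T : Type) (Q : T -> T -> seq T) (v p q : T) : seq T :=
  Q p v ++ v :: Q v q.

Definition bypass_paths (T : eqType) (Q : T -> T -> seq T) (v a b : T) :
    T -> T -> seq T := fun x y =>
  if (x == a) && (y == b) then splice Q v a b
  else if (x == b) && (y == a) then splice Q v b a else Q x y.

Lemma bypass_paths_new (T : eqType) (Q : T -> T -> seq T) (v a b : T) : a != b ->
  bypass_paths Q v a b a b = splice Q v a b /\ bypass_paths Q v a b b a = splice Q v b a.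
Proof. by move=> ab; rewrite /bypass_paths (negbTE ab) andbF !eqxx. Qed.

Section BypassSubdivision.
Variables (T : finType) (e : rel T) (S : {set T}) (h : rel T) (Q : T -> T -> seq T).
Variable v : T.
Hypotheses (sd : subdivision e S h Q) (vS : v \in S).

Lemma notin_interior x y : h x y -> v \notin Q x y.
Proof. by move=> xy; apply: contraTN vS => /(sd_interior sd xy). Qed.

Section Splice.
Variables (p q : T).
Hypotheses (vp : h v p) (vq : h v q).

Lemma rev_splice : rev (splice Q v p q) = splice Q v q p.
Proof.
rewrite /splice rev_cat rev_cons -cats1 -catA /=.
by rewrite -(sd_rev sd vq) (sd_rev sd vp) revK.
Qed.

Lemma splice_path : path e p (rcons (splice Q v p q) q).
Proof.
have pv : h p v by rewrite (sd_sym sd).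
rewrite /splice -cat_rcons rcons_cat cat_path last_rcons.
by rewrite (sd_path sd pv) (sd_path sd vq).
Qed.

Lemma splice_uniq : p != q -> uniq (splice Q v p q).
Proof.
move=> pq; have pv : h p v by rewrite (sd_sym sd).
rewrite /splice cat_uniq /= (notin_interior vq) (sd_uniq sd pv) (sd_uniq sd vq) andbT /=.
rewrite negb_or (notin_interior pv) /= -disjoint_has disjoint_sym andbT.
by rewrite (sd_disjoint sd pv vq) // (negbTE pq) (negbTE (rel_neq (sd_irr sd) vq)) andbF.
Qed.

Lemma splice_interior z : z \in splice Q v p q -> z \notin S :\ v.
Proof.
have pv : h p v by rewrite (sd_sym sd).
rewrite mem_cat in_cons !inE => /or3P[zQ|->|zQ] //.
  by rewrite (negbTE (sd_interior sd pv zQ)) andbF.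
by rewrite (negbTE (sd_interior sd vq zQ)) andbF.
Qed.

Lemma splice_disjoint x y : h x y -> x != v -> y != v ->
  [disjoint Q x y & splice Q v p q].
Proof.
move=> xy xv yv; have pv : h p v by rewrite (sd_sym sd).
rewrite disjoint_sym disjoint_cat disjoint_cons (notin_interior xy) /=.
rewrite (sd_disjoint sd pv xy) ?(sd_disjoint sd vq xy) //;
  by rewrite ![v == _]eq_sym (negbTE xv) (negbTE yv) ?andbF.
Qed.

End Splice.

Variables (a b : T).
Hypothesis Hab : a != b -> [&& h v a, h v b & ~~ h a b].
Local Notation R := (bypass_paths Q v a b).

Lemma bypass_paths_old x y : h x y -> R x y = Q x y.
Proof.
move=> xy; have nab : ~~ h a b.
  by have [<-|/Hab/and3P[]//] := eqVneq a b; rewrite (sd_irr sd).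
rewrite /bypass_paths; case: ifP => [/andP[/eqP xa /eqP yb]|_].
  by move: xy nab; rewrite xa yb => ->.
case: ifP => [/andP[/eqP xb /eqP ya]|//].
by move: xy nab; rewrite xb ya (sd_sym sd) => ->.
Qed.

Lemma bypass_pathsP x y : bypass h v a b x y ->
  [/\ h x y, x != v, y != v & R x y = Q x y] \/
  [/\ h v x, h v y, x != y & R x y = splice Q v x y].
Proof.
case/bypassP=> [xy xv yv|ab -> ->|ab -> ->]; first by left; rewrite bypass_paths_old.
all: right; case/and3P: (Hab ab) => va vb _; have [Rab Rba] := bypass_paths_new Q v ab.
  by rewrite Rab.
by rewrite eq_sym Rba.
Qed.

Lemma bypass_paths_disjoint x y x' y' : bypass h v a b x y -> bypass h v a b x' y' ->
  ~~ (((x == x') && (y == y')) || ((x == y') && (y == x'))) -> [disjoint R x y & R x' y'].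
Proof.
move=> /bypassP[xy xv yv|ab -> ->|ab -> ->] /bypassP[x'y' x'v y'v|ab' -> ->|ab' -> ->] ne.
all: try by rewrite !eqxx ?orbT in ne.
- by rewrite !bypass_paths_old // (sd_disjoint sd).
- case/and3P: (Hab ab') => va vb _; have [-> _] := bypass_paths_new Q v ab'.
  by rewrite bypass_paths_old // splice_disjoint.
- case/and3P: (Hab ab') => va vb _; have [_ ->] := bypass_paths_new Q v ab'.
  by rewrite bypass_paths_old // splice_disjoint.
- case/and3P: (Hab ab) => va vb _; have [-> _] := bypass_paths_new Q v ab.
  by rewrite bypass_paths_old // disjoint_sym splice_disjoint.
- case/and3P: (Hab ab) => va vb _; have [_ ->] := bypass_paths_new Q v ab.
  by rewrite bypass_paths_old // disjoint_sym splice_disjoint.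
Qed.

Lemma subdivision_bypass : subdivision e (S :\ v) (bypass h v a b) R.
Proof.
have [hsym hirr] := (sd_sym sd, sd_irr sd).
split; [exact: bypass_sym | exact: bypass_irr | | | | | | exact: bypass_paths_disjoint].
- move=> x y /bypass_pathsP[[xy xv _ _]|[vx _ _ _]].
    by rewrite !inE xv (sd_branch sd xy).
  rewrite !inE (nbr_neqv hirr vx).
  by apply: (sd_branch sd (y := v)); rewrite hsym.
- move=> x y /bypass_pathsP[[xy _ _ ->]|[vx vy _ ->]]; first exact: (sd_path sd).
  exact: splice_path.
- move=> x y /bypass_pathsP[[xy _ _ ->]|[vx vy xy ->]]; first exact: (sd_uniq sd).
  exact: splice_uniq.
- move=> x y /bypassP[xy _ _|ab -> ->|ab -> ->].
  + have yx : h y x by rewrite hsym.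
    by rewrite !bypass_paths_old // (sd_rev sd xy).
  + case/and3P: (Hab ab) => va vb _; have [-> ->] := bypass_paths_new Q v ab.
    by rewrite rev_splice.
  + case/and3P: (Hab ab) => va vb _; have [-> ->] := bypass_paths_new Q v ab.
    by rewrite rev_splice.
- move=> x y z /bypass_pathsP[[xy _ _ ->] zQ|[vx vy _ ->]]; last exact: splice_interior.
  by rewrite !inE (negbTE (sd_interior sd xy zQ)) andbF.
Qed.

End BypassSubdivision.

Definition happy (T : finType) (h : rel T) (m : nat) (c : T -> 'I_m) (x : T) : Prop :=
  deg h x <= 1 \/ exists y z, [/\ h x y, h x z & c y != c z].

Lemma happy_eq (T : finType) (h g : rel T) m (c d : T -> 'I_m) x :
  h x =1 g x -> (forall y, h x y -> c y = d y) -> happy h c x -> happy g d x.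
Proof.
move=> hg; have degE : deg h x = deg g x by apply: eq_card => y; rewrite !inE hg.
move=> cd [hx|[y [z [xy xz cyz]]]]; first by left; rewrite -degE.
by right; exists y, z; rewrite -!hg -!cd.
Qed.

Section Extension.
Variables (T : finType) (h : rel T) (v : T) (m : nat) (c : T -> 'I_m).
Hypotheses (hsym : symmetric h) (hirr : irreflexive h).

Definition other_nbrs (u : T) : {set T} := [set w | h u w & w != v].

Definition monochromatic (u : T) : bool :=
  [forall w in other_nbrs u, forall w' in other_nbrs u, c w == c w'].

Definition mono_nbrs : {set T} :=
  [set u | [&& h v u, other_nbrs u != set0 & monochromatic u]].

Definition mono_color (u : T) : 'I_m := c (odflt v [pick w in other_nbrs u]).

(* A neighbour [u] of [v] all of whose other neighbours share one colour is happy
   only if [v] gets a different colour. *)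
Definition forbidden : {set 'I_m} :=
  c @: [set u | h v u] :|: mono_color @: mono_nbrs.

Definition recolor (col : 'I_m) (x : T) : 'I_m := if x == v then col else c x.

Lemma card_mono_nbrs : #|mono_nbrs| <= deg h v.
Proof. by apply: subset_leq_card; apply/subsetP=> u; rewrite !inE => /andP[]. Qed.

Lemma card_forbidden : #|forbidden| <= deg h v + #|mono_nbrs|.
Proof. by rewrite (leq_trans (leq_card_setU _ _)) // leq_add ?leq_imset_card. Qed.

Lemma nbr_not_forbidden col u : col \notin forbidden -> h v u -> col != c u.
Proof.
by move=> colF vu; apply: contraNneq colF => ->; rewrite inE imset_f ?inE.
Qed.

Lemma mono_not_forbidden col u w : col \notin forbidden ->
  u \in mono_nbrs -> w \in other_nbrs u -> col != c w.
Proof.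
move=> colF uM uw; apply: contraNneq colF => ->; rewrite inE orbC.
suff <- : mono_color u = c w by rewrite imset_f.
move: uM; rewrite inE /mono_color => /and3P[_ _ /forall_inP mono].
by case: pickP => [w0 uw0|/(_ w)]; [apply/eqP/(forall_inP (mono _ uw0)) | rewrite uw].
Qed.

Variables (a b : T).
Hypothesis Hab : a != b -> [&& h v a, h v b & ~~ h a b].
Local Notation g := (bypass h v a b).

Lemma recolor_proper col : (forall x y, g x y -> c x != c y) ->
  col \notin forbidden -> forall x y, h x y -> recolor col x != recolor col y.
Proof.
move=> proper colF x y xy; rewrite /recolor.
have [xv|xv] := eqVneq x v.
  by rewrite xv in xy *; rewrite (nbr_neqv hirr) // nbr_not_forbidden.
have [yv|yv] := eqVneq y v; last exact/proper/bypass_old_edge.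
by rewrite yv in xy *; rewrite eq_sym nbr_not_forbidden // hsym.
Qed.

Lemma recolor_happy_nbr col u :
  col \notin forbidden -> h v u -> happy h (recolor col) u.
Proof.
move=> colF vu; have recolorE w : w \in other_nbrs u -> recolor col w = c w.
  by rewrite inE /recolor => /andP[_ /negbTE->].
have uv : h u v by rewrite hsym.
case: (boolP (monochromatic u)) => [mono|]; last first.
  case/forall_inPn=> w uw /forall_inPn[w' uw' cww']; right; exists w, w'.
  rewrite (recolorE w uw) (recolorE w' uw'); split=> //.
    by move: uw; rewrite inE => /andP[].
  by move: uw'; rewrite inE => /andP[].
case: (set_0Vmem (other_nbrs u)) => [O0|[w uw]].
  left; rewrite /deg -(cards1 v) subset_leq_card //; apply/subsetP=> y.
  rewrite !inE => uy; apply: contraT => yv.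
  suff : y \in other_nbrs u by rewrite O0 inE.
  by rewrite inE uy.
right; exists v, w; rewrite (recolorE w uw) /recolor eqxx; split=> //.
  by move: uw; rewrite inE => /andP[].
apply: (mono_not_forbidden colF _ uw); rewrite inE vu mono andbT.
by apply/set0Pn; exists w.
Qed.

Lemma recolor_dynamic col : dynamic_coloring g c -> happy h c v ->
  col \notin forbidden -> dynamic_coloring h (recolor col).
Proof.
move=> [proper happy_g] happy_v colF; split; first exact: recolor_proper.
move=> x; have [->|xv] := eqVneq x v.
  by apply: happy_eq happy_v => // y vy; rewrite /recolor (nbr_neqv hirr vy).
have [vx|nvx] := boolP (h v x); first exact: recolor_happy_nbr.
apply: happy_eq (happy_g x) => [|y]; first exact: (bypass_nonnbr hsym Hab xv nvx).
rewrite (bypass_nonnbr hsym Hab) // /recolor => xy; rewrite ifN //.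
by apply: contraNneq nvx => <-; rewrite hsym.
Qed.

Lemma bypass_happy : (a = b -> forall x y, h v x -> h v y -> x != y -> h x y) ->
  (forall x y, g x y -> c x != c y) -> happy h c v.
Proof.
move=> clique proper; have [ab|ab] := eqVneq a b; last first.
  right; exists a, b; case/and3P: (Hab ab) => va vb _; split=> //.
  by apply: proper; rewrite /bypass ab !eqxx orbT.
case: (leqP (deg h v) 1) => [|/card_gt1P[x [y [vx vy xy]]]]; [by left | right].
rewrite !inE in vx vy; exists x, y; split=> //; apply/proper/bypass_old_edge.
- exact: clique.
- by rewrite (nbr_neqv hirr).
- by rewrite (nbr_neqv hirr).
Qed.

Lemma mono_nbrs_bypass : dynamic_coloring g c ->
  (forall u, h v u -> 2 < deg h u) -> mono_nbrs \subset [set a; b].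
Proof.
move=> [_ happy_g] big; apply/subsetP=> u; rewrite !inE => /and3P[vu _ mono].
apply: contraTT mono; rewrite negb_or => /andP[ua ub].
have gu w : g u w = (w \in other_nbrs u).
  by rewrite inE /bypass (nbr_neqv hirr) // (negbTE ua) (negbTE ub) /= andbF orbF.
have : 1 < #|other_nbrs u|.
  have := big _ vu; rewrite /deg (cardsD1 v) !inE hsym vu.
  suff -> : [set y | h u y] :\ v = other_nbrs u by [].
  by apply/setP=> w; rewrite !inE andbC.
have -> : #|other_nbrs u| = deg g u by apply: eq_card => w; rewrite inE gu.
case: (happy_g u) => [d1|[x [y [ux uy cxy]]] _]; first by rewrite ltnNge d1.
rewrite gu in ux; rewrite gu in uy.
by apply/forall_inPn; exists x => //; apply/forall_inPn; exists y.
Qed.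

End Extension.

Lemma bypass_pair (T : finType) (h : rel T) (v : T) : exists a b,
  (a != b -> [&& h v a, h v b & ~~ h a b]) /\
  (a = b -> forall x y, h v x -> h v y -> x != y -> h x y).
Proof.
pose P := [pred p : T * T | [&& h v p.1, h v p.2, p.1 != p.2 & ~~ h p.1 p.2]].
case: (pickP P) => [[a b] /and4P[/= va vb ab nab]|none].
  by exists a, b; split=> [|eab]; [rewrite va vb nab | rewrite eab eqxx in ab].
exists v, v; split=> [|_ x y vx vy xy]; first by rewrite eqxx.
by apply/negPn/negP => nxy; have := none (x, y); rewrite /P /= vx vy xy nxy.
Qed.

Lemma dynamically_colorable_edgeless (T : finType) (h : rel T) m :
  0 < m -> (forall x y, ~~ h x y) -> dynamically_colorable h m.
Proof.
move=> m_gt0 noedge; exists (fun=> Ordinal m_gt0); split=> [x y|x].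
  by rewrite (negbTE (noedge x y)).
left; rewrite /deg (eq_card (B := pred0)) ?card0 // => y.
by rewrite inE (negbTE (noedge x y)).
Qed.

Lemma exists_notin_ord m (F : {set 'I_m}) : #|F| < m -> exists i, i \notin F.
Proof.
move=> ltFm; have : 0 < #|~: F| by have := cardsC F; rewrite card_ord; lia.
by case/card_gt0P=> i; rewrite inE; exists i.
Qed.

Lemma reducible_vertex (T : finType) (e : rel T) k S h Q :
  minors_mindeg_le e k -> subdivision e S h Q -> 0 < #|S| ->
  exists2 v, v \in S &
    2 * deg h v <= k.+2 \/ deg h v <= k /\ (forall u, h v u -> 2 < deg h u).
Proof.
move=> mindeg sd Spos; have [v vS vk] := subdivision_low_degree mindeg sd Spos.
case: (leqP (deg h v) 1) => [v1|v2]; first by exists v => //; left; lia.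
case: (pickP [pred u | (u \in S) && (deg h u <= 2)]) => [u /andP[uS u2]|none].
  by exists u => //; left; lia.
exists v => //; right; split=> // u vu; rewrite ltnNge.
apply/negP => u2; have := none u; rewrite /= u2 andbT.
by rewrite (sd_branch sd (y := v)) // (sd_sym sd).
Qed.

Lemma subdivision_dynamically_colorable (T : finType) (e : rel T) k S h Q :
  minors_mindeg_le e k -> subdivision e S h Q -> dynamically_colorable h (k + 3).
Proof.
move=> mindeg; have [n ltSn] := ubnP #|S|.
elim: n S h Q ltSn => // n IH S h Q ltSn sd.
have [S0|Spos] := posnP #|S|.
  apply: dynamically_colorable_edgeless; first by rewrite addn3.
  move=> x y; apply/negP => /(sd_branch sd).
  by rewrite (cards0_eq S0) inE.
have [hsym hirr] := (sd_sym sd, sd_irr sd).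
have [v vS vred] := reducible_vertex mindeg sd Spos.
have [a [b [Hab clique]]] := bypass_pair h v.
have [|c colc] := IH (S :\ v) _ _ _ (subdivision_bypass sd vS Hab).
  by rewrite (cardsD1 v S) vS in ltSn.
have [col colF] : exists col, col \notin forbidden h v c.
  apply: exists_notin_ord; have := card_forbidden h v c.
  have := card_mono_nbrs h v c; case: vred => [|[vk big]]; first lia.
  have := subset_leq_card (mono_nbrs_bypass hsym hirr colc big).
  have := leq_b1 (a != b); rewrite cards2; lia.
have happy_v := bypass_happy hirr Hab clique (proj1 colc).
by exists (recolor v c col); apply: (recolor_dynamic hsym hirr Hab colc happy_v colF).
Qed.

Theorem lemma6p2 (k : nat) (T : finType) (e : rel T) :
  simple_graph e ->
  (forall (V : finType) (eH : rel V), simple_graph eH -> 0 < #|V| ->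
     topological_minor eH e -> exists x : V, deg eH x <= k) ->
  dynamically_colorable e (k + 3).
Proof.
move=> simple mindeg.
exact: subdivision_dynamically_colorable mindeg (subdivision_refl simple).
Qed.
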